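(* Let $d=\infty$, $C>0$, and let ${\boldsymbol\gamma}$ be POD weights with parameters $a,p$ such that $\Gamma_1>0$, $p>a$ and $\sum_{j\in\mathbb N}\gamma_j<\infty$. Then ${\boldsymbol\gamma}\in\mathcal S_{\infty,C}$ and $$\mathrm{decay}(T^\uparrow_{\infty,C}{\boldsymbol\gamma})=\mathrm{decay}({\boldsymbol\gamma})=p.$$
   Context: $\mathcal U_\infty$ is the set of finite subsets of $\mathbb N$; weights are families $(\gamma_u)_{u\in\mathcal U_\infty}$ of non-negative reals. For a family $(a_v)_{v\in V}$ of non-negative reals indexed by a countably infinite set $V$, $\mathrm{decay}((a_v))=\sup\{\tau>0:\sum_{v\in V}a_v^{1/\tau}<\infty\}$ with $\sup\emptyset=0$. POD weights: $\gamma_u=\Gamma_{|u|}\prod_{j\in u}\gamma_j$ for a non-increasing sequence $(\gamma_j)_{j\in\mathbb N}$ of non-negative reals and non-negative $(\Gamma_k)_{k\ge0}$ with $\Gamma_k\le C_a(k!)^a$ for all $k$, some $a,C_a>0$; $p=\mathrm{decay}((\gamma_j)_{j\in\mathbb N})$. For $C>0$: $\mathcal S_{\infty,C}=\{{\boldsymbol\gamma}:\sum_vC^{2|v|}\gamma_v<\infty\}$ and $(T^\uparrow_{\infty,C}{\boldsymbol\gamma})_u=\sum_{v\in\mathcal U_\infty,\,v\supseteq u}C^{2|v|}\gamma_v$. *)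

From HB Require Import structures.
From mathcomp Require Import all_boot all_order all_algebra finmap.
From mathcomp Require Import all_classical all_reals all_analysis.
Set Implicit Arguments. Unset Strict Implicit. Unset Printing Implicit Defensive.
Import Order.TTheory GRing.Theory Num.Theory.
Local Open Scope classical_set_scope.
Local Open Scope ring_scope.

(* U_infty = finite subsets of N, represented by {fset nat}. *)
Notation Uinf := {fset nat}.

(* decay((a_v)_{v in V}) = sup{ tau > 0 : sum_v a_v^(1/tau) < oo }, sup of empty = 0.
   Values in the extended reals (decay may be +oo). *)
Definition decay (R : realType) (V : choiceType) (a : V -> R) : \bar R :=
  ereal_sup ([set (tau%:E)%E | tau in
               [set tau : R | 0 < tau /\
                  (esum setT (fun v => ((a v) `^ (1 / tau))%:E) < +oo)%E]]
             `|` [set 0%E]).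

Definition POD (R : realType) (Gam gam : nat -> R) (u : Uinf) : R :=
  Gam #|` u| * \prod_(j <- u) gam j.

Definition S_inf (R : realType) (C : R) (g : Uinf -> R) : Prop :=
  (esum setT (fun v : Uinf => (C ^+ (2 * #|` v|) * g v)%:E) < +oo)%E.

(* (T^up_{infty,C} gamma)_u = sum_{v superset of u} C^(2|v|) gamma_v
   (real-valued via fine; finite whenever gamma is in S_{infty,C}). *)
Definition Tup (R : realType) (C : R) (g : Uinf -> R) (u : Uinf) : R :=
  fine (esum [set v : Uinf | (u `<=` v)%fset]
             (fun v : Uinf => (C ^+ (2 * #|` v|) * g v)%:E)).

From HB Require Import structures.
From mathcomp Require Import all_boot all_order all_algebra finmap.
From mathcomp Require Import all_classical all_reals all_analysis.
From mathcomp.algebra_tactics Require Import ring lra.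
Set Implicit Arguments. Unset Strict Implicit. Unset Printing Implicit Defensive.
Import Order.TTheory GRing.Theory Num.Theory.
Local Open Scope classical_set_scope.
Local Open Scope ring_scope.

(** For [q = 1/t] with [a q < 1], [(C^(2|u|) γ_u)^q <= Ca^q (|u|!)^(aq) Π_(j ∈ u) b_j] with
    [b_j = C^(2q) γ_j^q]. Grouping the finite sets [u] by size, [e_m t^m <= Π_j (1 + t b_j)
    <= exp (t S)] for [S >= Σ_j b_j] and [t = m / S] bounds the [m]-th elementary symmetric sum
    of the [b_j] by [(e S / m)^m]; since [m! <= m^m] and [a q < 1], the series
    [Σ_m (m!)^(aq) (e S / m)^m] converges. So if [γ^(1/t)] is summable for some [t > a], so are
    the POD weights [γ_u^(1/t)] and even [2^|u| (C^(2|u|) γ_u)^(1/t)]. The factor [2^|v|], the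
    number of subsets of [v], is the price of [T↑] once [(Σ_(v ⊇ u) x_v)^(1/t) <=
    Σ_(v ⊇ u) x_v^(1/t)] is used (for [t >= 1]). Conversely, as [Γ_1 > 0], the singletons give
    [γ_j ≲ γ_{j} <= (T↑ γ)_{j}], so neither decay exceeds that of [γ]. *)

Definition summableR {R : realType} {T : choiceType} (f : T -> R) : Prop :=
  (esum setT (fun x => (f x)%:E) < +oo)%E.

Section power_sums.
Context {R : realType}.
Implicit Types x y r : R.

Lemma powR_superadd x y r : 0 <= x -> 0 <= y -> 1 <= r ->
  x `^ r + y `^ r <= (x + y) `^ r.
Proof.
move=> x0 y0 r1; have [xy0|xy_neq0] := eqVneq (x + y) 0.
  have [-> ->] : x = 0 /\ y = 0 by lra.
  by rewrite addr0 powR0 // gt_eqF // (lt_le_trans ltr01).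
have xy_gt0 : 0 < x + y by rewrite lt_neqAle eq_sym xy_neq0 addr_ge0.
have frac_powR_le z : 0 <= z <= x + y -> (z / (x + y)) `^ r <= z / (x + y).
  case/andP=> z0 zxy; have [->|z_neq0] := eqVneq z 0.
    by rewrite mul0r powR0 // gt_eqF // (lt_le_trans ltr01).
  apply: ge1r_powR r1; apply/andP; split.
    by rewrite divr_gt0 // lt_neqAle eq_sym z_neq0.
  by rewrite ler_pdivrMr // mul1r.
have scale w : 0 <= w -> w `^ r = (x + y) `^ r * (w / (x + y)) `^ r.
  move=> w0; rewrite -powRM ?divr_ge0 ?(ltW xy_gt0) //.
  by rewrite mulrC divfK // gt_eqF.
rewrite (scale x x0) (scale y y0) -mulrDr.
rewrite -[leRHS]mulr1 ler_wpM2l ?powR_ge0 //.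
rewrite -[1](divff (lt0r_neq0 xy_gt0)) mulrDl.
by apply: lerD; apply: frac_powR_le; lra.
Qed.

Lemma sum_le_powR_sum_root {I : Type} (s : seq I) (f : I -> R) r :
  1 <= r -> (forall i, 0 <= f i) ->
  \sum_(i <- s) f i <= (\sum_(i <- s) f i `^ (1 / r)) `^ r.
Proof.
move=> r1 f0; have r_gt0 : 0 < r by rewrite (lt_le_trans ltr01).
elim: s => [|i s IH]; first by rewrite !big_nil powR_ge0.
have root_powR : (f i `^ (1 / r)) `^ r = f i.
  by rewrite -powRrM mul1r mulVf ?gt_eqF // powRr1.
rewrite !big_cons.
apply: (le_trans (y := (f i `^ (1 / r)) `^ r + (\sum_(j <- s) f j `^ (1 / r)) `^ r)).
  by rewrite root_powR lerD2l.
by apply: powR_superadd; rewrite ?powR_ge0 ?sumr_ge0 // => j _; exact: powR_ge0.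
Qed.

Lemma powR_exprn x y (m : nat) : 0 <= x -> (x ^+ m) `^ y = (x `^ y) ^+ m.
Proof. by move=> x0; rewrite -powR_mulrn // powRAC powR_mulrn // powR_ge0. Qed.

Lemma powR_prod (I : Type) (s : seq I) (F : I -> R) r :
  (forall i, 0 <= F i) -> (\prod_(i <- s) F i) `^ r = \prod_(i <- s) F i `^ r.
Proof.
move=> F0; elim: s => [|i s IH]; first by rewrite !big_nil powR1.
by rewrite !big_cons powRM ?IH // prodr_ge0.
Qed.

End power_sums.

Section summable.
Context {R : realType} {T : choiceType}.
Implicit Types f : T -> R.

Lemma summableRP f : (forall x, 0 <= f x) ->
  summableR f <-> exists M, forall s : seq T, uniq s -> \sum_(x <- s) f x <= M.
Proof.
move=> f0; split => [sum_f|[M sM]].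
  exists (fine (esum setT (fun x => (f x)%:E))) => s s_uniq.
  have esum_ge0' : (0 <= esum setT (fun x => (f x)%:E))%E.
    by apply: esum_ge0 => x _; rewrite lee_fin.
  rewrite -lee_fin fineK ?ge0_fin_numE // -sumEFin.
  apply: esum_ge; exists [set` s]; first by split => //; exact: finite_set_seq.
  by rewrite fsbig_seq.
apply: (le_lt_trans (y := M%:E)); last exact: ltry.
apply: ge_ereal_sup => _ [X [finX _] <-].
by rewrite fsbig_finite //= sumEFin lee_fin sM // fset_uniq.
Qed.

Lemma esum_le_esumT (A : set T) (g : T -> \bar R) :
  (esum A g <= esum setT g)%E.
Proof. by apply: ge_ereal_sup => _ [X [finX _] <-]; apply: esum_ge; exists X. Qed.

Lemma esum_le_powR_esum_root (A : set T) f (r : R) :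
  1 <= r -> (forall x, 0 <= f x) ->
  (esum A (fun x => (f x `^ (1 / r))%:E) < +oo)%E ->
  (esum A (fun x => (f x)%:E) <=
     ((fine (esum A (fun x => (f x `^ (1 / r))%:E))) `^ r)%:E)%E.
Proof.
move=> r1 f0; set E := esum A _ => E_fin.
have E_ge0 : (0 <= E)%E by apply: esum_ge0 => x _; rewrite lee_fin powR_ge0.
apply: ge_ereal_sup => _ [X [finX XA] <-].
rewrite fsbig_finite //= sumEFin lee_fin.
apply: le_trans (sum_le_powR_sum_root _ r1 f0) _.
apply: ge0_ler_powR; rewrite ?nnegrE ?fine_ge0 ?sumr_ge0 //.
- by rewrite (le_trans ler01).
- by move=> x _; exact: powR_ge0.
rewrite -lee_fin fineK ?ge0_fin_numE // -sumEFin -fsbig_finite //.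
by apply: esum_ge; exists X.
Qed.

End summable.

Lemma summableR_of_fset1 {R : realType} {K : choiceType}
    (F : {fset K} -> R) (h : K -> R) (c : R) :
  0 < c -> (forall j, 0 <= h j) -> (forall u, 0 <= F u) ->
  (forall j, c * h j <= F [fset j]%fset) -> summableR F -> summableR h.
Proof.
move=> c_gt0 h0 F0 hF /(summableRP F0)[M sM]; apply/(summableRP h0).
exists (c^-1 * M) => s s_uniq; rewrite ler_pdivlMl // mulr_sumr.
apply: le_trans (sM [seq [fset j]%fset | j <- s] _); last first.
  by rewrite map_inj_uniq // => i j /fsetP/(_ i); rewrite !inE eqxx => /esym/eqP.
by rewrite big_map; apply: ler_sum => j _.
Qed.

Lemma fact_le_expn m : (m`! <= m ^ m)%N.
Proof.
elim: m => [//|m IH]; rewrite factS expnS leq_mul2l /=.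
apply: leq_trans IH _; case: m => [//|m].
by rewrite leq_exp2r.
Qed.

Section subset_sums.
Context {R : realType}.

Lemma sum_subsets_le_expR N (b : 'I_N -> R) (t : R) :
  0 <= t -> (forall i, 0 <= b i) ->
  \sum_(A : {set 'I_N}) t ^+ #|A| * \prod_(i in A) b i <= expR (t * \sum_i b i).
Proof.
move=> t0 b0.
have -> : \sum_(A : {set 'I_N}) t ^+ #|A| * \prod_(i in A) b i =
          \prod_i (t * b i + 1).
  rewrite bigA_distr; apply: eq_bigr => A _.
  by rewrite -big_mkcond /= big_split /= prodr_const.
rewrite mulr_sumr expR_sum; apply: ler_prod => i _.
by rewrite addrC expR_ge1Dx addr_ge0 // mulr_ge0.
Qed.

Lemma sum_weighted_subsets_le N (w : nat -> R) (b : 'I_N -> R) (S B : R) :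
  (forall m, 0 <= w m) -> (forall i, 0 <= b i) -> 0 < S -> \sum_i b i <= S ->
  \sum_(m < N.+1) w m * (S / m%:R) ^+ m * expR m%:R <= B ->
  \sum_(A : {set 'I_N}) w #|A| * \prod_(i in A) b i <= B.
Proof.
move=> w0 b0 S_gt0 bS wB.
pose t (m : nat) := m%:R / S.
have t_ge0 m : 0 <= t m by rewrite divr_ge0 // ltW.
pose c (m : nat) := w m * (S / m%:R) ^+ m.
have c_ge0 m : 0 <= c m by rewrite mulr_ge0 ?exprn_ge0 ?divr_ge0 // ltW.
have ct m : c m * t m ^+ m = w m.
  rewrite -mulrA -exprMn; case: m => [|m]; first by rewrite !expr0 mulr1.
  by rewrite mulrA divfK ?pnatr_eq0 // divff ?gt_eqF // expr1n mulr1.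
(* [w |A|] is the term [m = |A|] of the sum below. *)
have w_le (A : {set 'I_N}) : w #|A| <= \sum_(m < N.+1) c m * t m ^+ #|A|.
  have A_lt : (#|A| < N.+1)%N by rewrite ltnS (leq_trans (max_card _)) ?card_ord.
  rewrite (bigD1 (Ordinal A_lt)) //= ct lerDl.
  by apply: sumr_ge0 => m _; rewrite mulr_ge0 ?exprn_ge0.
apply: le_trans wB.
apply: (le_trans (y := \sum_(A : {set 'I_N}) \sum_(m < N.+1)
          c m * (t m ^+ #|A| * \prod_(i in A) b i))).
  apply: ler_sum => A _; apply: le_trans (ler_wpM2r _ (w_le A)) _.
    by apply: prodr_ge0.
  by rewrite big_distrl /=; under eq_bigr do rewrite -mulrA.
rewrite exchange_big /=; apply: ler_sum => m _.
have Sm_ge0 : 0 <= (S / m%:R) ^+ m by rewrite exprn_ge0 // divr_ge0 // ltW.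
rewrite -mulr_sumr /c -!mulrA ler_wpM2l // ler_wpM2l //.
apply: le_trans (sum_subsets_le_expR (t_ge0 m) b0) _.
by rewrite ler_expR /t mulrAC ler_pdivrMr // ler_wpM2l.
Qed.

Lemma exprn_diag_le (x : nat -> R) (z : R) (M : nat) :
  1 <= z -> (forall m, 0 <= x m <= z) -> (forall m, (M <= m)%N -> x m <= 1) ->
  forall m, x m ^+ m <= z ^+ M.
Proof.
move=> z1 xz x1 m; have /andP[x0 xmz] := xz m.
have [Mm|mM] := leqP M m.
  by rewrite (le_trans (exprn_ile1 _ x0 (x1 _ Mm))) // exprn_ege1.
apply: (le_trans (y := z ^+ m)); first by rewrite lerXn2r // nnegrE (le_trans x0).
by rewrite ler_weXn2l // ltnW.
Qed.

Lemma fact_powR_term_le (al S : R) (m : nat) : 0 <= al -> 0 <= S ->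
  m`!%:R `^ al * (S / m%:R) ^+ m * expR m%:R <=
    (S * expR 1 / m%:R `^ (1 - al)) ^+ m.
Proof.
move=> al0 S0; case: m => [|m]; first by rewrite powR1 !expr0 expR0 !mul1r.
set n := m.+1; have n_gt0 : 0 < n%:R :> R by rewrite ltr0n.
apply: (le_trans (y := (n%:R `^ al) ^+ n * (S / n%:R) ^+ n * expR 1 ^+ n)).
  rewrite -[X in expR X]mulr1 expRM_natl.
  rewrite ler_wpM2r ?exprn_ge0 ?expR_ge0 // ler_wpM2r ?exprn_ge0 ?divr_ge0 ?ler0n //.
  rewrite -powR_exprn ?ler0n // ge0_ler_powR ?nnegrE ?ler0n ?exprn_ge0 //.
  by rewrite -natrX ler_nat fact_le_expn.
have split_n : n%:R = n%:R `^ al * n%:R `^ (1 - al) :> R.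
  rewrite -powRD addrC subrK ?oner_eq0 //.
  by rewrite powRr1 // ler0n.
rewrite -!exprMn {2}split_n.
rewrite [X in X ^+ _ <= _](_ : _ = S * expR 1 / n%:R `^ (1 - al)) //.
by field; rewrite !gt_eqF ?powR_gt0.
Qed.

Lemma fact_powR_series_bounded (c al S : R) : 0 <= c -> 0 <= al < 1 -> 0 < S ->
  exists B, forall N,
    \sum_(m < N) c * (m`!%:R `^ al * (S / m%:R) ^+ m * expR m%:R) <= B.
Proof.
move=> c0 /andP[al0 al1] S_gt0.
have be_gt0 : 0 < 1 - al by rewrite subr_gt0.
pose y := 2 * (S * expR 1); have y_gt0 : 0 < y by rewrite !mulr_gt0 ?expR_gt0.
pose x (m : nat) := y / m%:R `^ (1 - al).
pose M := (Num.truncn (y `^ (1 - al)^-1)).+1.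
have x_bound m : 0 <= x m <= y + 1.
  apply/andP; split; first by rewrite /x divr_ge0 ?powR_ge0 // ltW.
  apply: (le_trans (y := y)); last by rewrite lerDl.
  (* [x 0 = y / 0 `^ (1 - al) = y / 0 = 0] *)
  case: m => [|m]; first by rewrite /x /= powR0 ?gt_eqF // invr0 mulr0 ltW.
  rewrite /x ler_pdivrMr ?powR_gt0 ?ltr0n // ler_peMr ?(ltW y_gt0) //.
  by rewrite -[leLHS](powRr0 m.+1%:R) ler_powR ?ler1n // ltW.
have x_le1 m : (M <= m)%N -> x m <= 1.
  move=> Mm; have m_gt0 : 0 < m%:R :> R by rewrite ltr0n (leq_trans _ Mm).
  rewrite /x ler_pdivrMr ?powR_gt0 // mul1r.
  have y_root : y = (y `^ (1 - al)^-1) `^ (1 - al).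
    by rewrite -powRrM mulVf ?lt0r_neq0 // powRr1 // ltW.
  rewrite [leLHS]y_root ge0_ler_powR ?nnegrE ?powR_ge0 ?ler0n ?subr_ge0 ?(ltW al1) //.
  by rewrite (le_trans (ltW (truncnS_gt _))) // ler_nat.
pose K := c * (y + 1) ^+ M.
have K_ge0 : 0 <= K by rewrite mulr_ge0 // exprn_ge0 // addr_ge0 ?ltW.
exists (K * 2) => N.
apply: (le_trans (y := \sum_(m < N) K * 2^-1 ^+ m)).
  apply: ler_sum => m _; rewrite /K -[c * _ * _]mulrA ler_wpM2l //.
  apply: le_trans (fact_powR_term_le _ al0 (ltW S_gt0)) _.
  have -> : S * expR 1 / m%:R `^ (1 - al) = x m * 2^-1.
    by rewrite /x /y [RHS]mulrAC [2 * _]mulrC mulfK // pnatr_eq0.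
  rewrite exprMn ler_wpM2r ?exprn_ge0 ?invr_ge0 //.
  by apply: exprn_diag_le => //; rewrite lerDr ltW.
have half_gt0 : 0 < 2^-1 :> R by rewrite invr_gt0.
have half_lt1 : `|2^-1 : R| < 1 by rewrite ger0_norm ?invf_lt1 ?ltr1n // ltW.
have := geometric_le_lim N K_ge0 half_gt0 half_lt1; rewrite seriesEord /=.
by rewrite [X in K / X](_ : _ = 2^-1) ?invrK //; lra.
Qed.

End subset_sums.

Definition fset_of_set {N : nat} (A : {set 'I_N}) : {fset nat} :=
  [fset val i | i in A]%fset.

Lemma card_fset_of_set N (A : {set 'I_N}) : #|` fset_of_set A| = #|A|.
Proof. by rewrite card_imfset /= ?cardE //; exact: val_inj. Qed.

Lemma prod_fset_of_set {R : comPzRingType} N (A : {set 'I_N}) (b : nat -> R) :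
  \prod_(j <- fset_of_set A) b j = \prod_(i in A) b (val i).
Proof. by rewrite big_imfset /= ?big_enum // => i j _ _; exact: val_inj. Qed.

Lemma sum_fsets_le_sum_subsets {R : realType} (G : {fset nat} -> R)
    (s : seq {fset nat}) :
  (forall u, 0 <= G u) -> uniq s ->
  exists N, \sum_(u <- s) G u <= \sum_(A : {set 'I_N}) G (fset_of_set A).
Proof.
move=> G0 s_uniq; pose N := (\max_(u <- s) \max_(j <- u) j.+1)%N; exists N.
have lt_N u j : u \in s -> j \in u -> (j < N)%N.
  move=> us ju; apply: leq_trans (@leq_bigmax_seq _ s xpredT _ u us isT).
  exact: (@leq_bigmax_seq _ (enum_fset u) xpredT succn j ju isT).
pose set_of (u : {fset nat}) : {set 'I_N} := [set i : 'I_N | val i \in u]%SET.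
have set_ofK u : u \in s -> fset_of_set (set_of u) = u.
  move=> us; apply/fsetP => j; apply/imfsetP/idP => [[i]|ju].
    by rewrite inE => iu ->.
  by exists (Ordinal (lt_N u j us ju)); rewrite ?inE.
have -> : \sum_(u <- s) G u = \sum_(A <- map set_of s) G (fset_of_set A).
  rewrite big_map big_seq [RHS]big_seq; apply: eq_bigr => u us.
  by rewrite set_ofK.
rewrite big_uniq; last first.
  rewrite map_inj_in_uniq // => u v us vs uv.
  by rewrite -(set_ofK u us) -(set_ofK v vs) uv.
rewrite [leRHS](bigID (mem (map set_of s))) /= lerDl.
by apply: sumr_ge0 => A _.
Qed.

Lemma count_fsubsets (K : choiceType) (s : seq {fset K}) (v : {fset K}) :
  uniq s -> (count (fun u => (u `<=` v)%fset) s <= 2 ^ #|` v|)%N.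
Proof.
move=> s_uniq; rewrite -size_filter -card_fpowerset.
apply: uniq_leq_size; first exact: filter_uniq.
by move=> u; rewrite mem_filter fpowersetE => /andP[].
Qed.

Lemma sum_esum_supersets_le {R : realType} {K : choiceType} (y : {fset K} -> R)
    (s : seq {fset K}) :
  (forall v, 0 <= y v) -> uniq s ->
  (\sum_(u <- s) esum [set v : {fset K} | (u `<=` v)%fset] (fun v => (y v)%:E) <=
     esum setT (fun v : {fset K} => (2 ^+ #|` v| * y v)%:E))%E.
Proof.
move=> y0 s_uniq; under eq_bigr do rewrite esum_mkcond.
rewrite -esum_sum; last by move=> v u _ _; case: ifP; rewrite ?lee_fin.
apply: le_esum => v _.
have mem_sup u : (v \in [set v : {fset K} | (u `<=` v)%fset]) = (u `<=` v)%fset.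
  by apply/idP/idP => [/set_mem|/mem_set].
under eq_bigr do rewrite mem_sup.
rewrite -big_mkcond /= sumEFin lee_fin big_const_seq iter_addr_0 -[_ *+ _]mulr_natl.
by rewrite ler_wpM2r // -natrX ler_nat count_fsubsets.
Qed.

Lemma mul_root_lt1 {R : realFieldType} (a t : R) : 0 < t -> a < t -> a * (1 / t) < 1.
Proof. by move=> t_gt0 at_; rewrite div1r ltr_pdivrMr // mul1r. Qed.

Section POD_weights.
Context {R : realType}.
Variables (Gam gam : nat -> R) (a Ca : R).
Hypotheses (gam_ge0 : forall j, 0 <= gam j) (Gam_ge0 : forall k, 0 <= Gam k).

Lemma POD_ge0 u : 0 <= POD Gam gam u.
Proof. by rewrite /POD mulr_ge0 // prodr_ge0. Qed.

Lemma POD_fset1 j : POD Gam gam [fset j]%fset = Gam 1%N * gam j.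
Proof. by rewrite /POD cardfs1 big_seq_fset1. Qed.

Lemma gam_root_summable_of_POD t : 0 < Gam 1%N ->
  summableR (fun u => POD Gam gam u `^ (1 / t)) ->
  summableR (fun j => gam j `^ (1 / t)).
Proof.
move=> Gam1_gt0; apply: (summableR_of_fset1 (c := Gam 1%N `^ (1 / t))).
- exact: powR_gt0.
- by move=> j; exact: powR_ge0.
- by move=> u; exact: powR_ge0.
- by move=> j; rewrite POD_fset1 powRM // ltW.
Qed.

Hypotheses (a_ge0 : 0 <= a) (Ca_ge0 : 0 <= Ca).
Hypothesis Gam_le : forall k, Gam k <= Ca * k`!%:R `^ a.

Lemma weighted_POD_powR_le (C D q : R) u : 0 <= C -> 0 <= D -> 0 <= q ->
  D ^+ #|` u| * (C ^+ (2 * #|` u|) * POD Gam gam u) `^ q <=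
    Ca `^ q * (#|` u|)`!%:R `^ (a * q) *
    \prod_(j <- u) (D * (C ^+ 2) `^ q * gam j `^ q).
Proof.
move=> C0 D0 q0; rewrite /POD; set k := #|` u|.
have Gam_powR : Gam k `^ q <= Ca `^ q * k`!%:R `^ (a * q).
  rewrite powRrM -powRM ?powR_ge0 // ge0_ler_powR ?nnegrE ?powR_ge0 //.
  exact: le_trans (Gam_ge0 k) (Gam_le k).
set P := D ^+ k * ((C ^+ 2) `^ q) ^+ k * \prod_(j <- u) gam j `^ q.
have P_ge0 : 0 <= P.
  by rewrite !mulr_ge0 ?exprn_ge0 ?powR_ge0 //; apply: prodr_ge0 => j _; exact: powR_ge0.
have -> : \prod_(j <- u) (D * (C ^+ 2) `^ q * gam j `^ q) = P.
  by rewrite !big_split /= !big_const_seq !count_predT !iter_mulr_1.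
rewrite !powRM ?mulr_ge0 ?exprn_ge0 ?prodr_ge0 // exprM powR_exprn ?exprn_ge0 //.
rewrite powR_prod // [leRHS]mulrC.
have -> : D ^+ k * (((C ^+ 2) `^ q) ^+ k * (Gam k `^ q * \prod_(j <- u) gam j `^ q)) =
    P * Gam k `^ q by rewrite /P; ring.
exact: ler_wpM2l.
Qed.

Lemma weighted_POD_powR_summable (C D q : R) :
  0 <= C -> 0 <= D -> 0 < q -> a * q < 1 ->
  summableR (fun j => gam j `^ q) ->
  summableR (fun u : {fset nat} =>
    D ^+ #|` u| * (C ^+ (2 * #|` u|) * POD Gam gam u) `^ q).
Proof.
move=> C0 D0 q_gt0 aq_lt1 /(summableRP (fun j => powR_ge0 (gam j) q))[M sum_le_M].
have M_ge0 : 0 <= M by have := sum_le_M [::] isT; rewrite big_nil.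
pose K := D * (C ^+ 2) `^ q; have K_ge0 : 0 <= K by rewrite mulr_ge0 ?powR_ge0.
pose b j := K * gam j `^ q; have b_ge0 j : 0 <= b j by rewrite mulr_ge0 ?powR_ge0.
pose S := K * M + 1; have S_gt0 : 0 < S by apply: ltr_wpDl; [exact: mulr_ge0 | exact: ltr01].
pose w m := Ca `^ q * m`!%:R `^ (a * q); have w_ge0 m : 0 <= w m by rewrite mulr_ge0 ?powR_ge0.
have aq_bounds : 0 <= a * q < 1 by rewrite aq_lt1 mulr_ge0 // ltW.
have [B wB] := fact_powR_series_bounded (powR_ge0 Ca q) aq_bounds S_gt0.
apply/summableRP; first by move=> u; rewrite mulr_ge0 ?exprn_ge0 ?powR_ge0.
exists B => s s_uniq.
pose G u := w #|` u| * \prod_(j <- u) b j.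
have [N sum_le] : exists N, \sum_(u <- s) G u <= \sum_(A : {set 'I_N}) G (fset_of_set A).
  by apply: sum_fsets_le_sum_subsets s_uniq => u; rewrite mulr_ge0 ?prodr_ge0.
apply: le_trans (ler_sum _ (fun u _ => weighted_POD_powR_le u C0 D0 (ltW q_gt0))) _.
apply: le_trans sum_le _.
under eq_bigr do rewrite /G card_fset_of_set prod_fset_of_set.
apply: (sum_weighted_subsets_le (S := S)) => //.
  apply: (le_trans (y := K * M)); last by rewrite lerDl.
  rewrite -mulr_sumr ler_wpM2l //; have := sum_le_M (iota 0 N) (iota_uniq 0 N).
  by rewrite -(big_mkord xpredT (fun i => gam i `^ q)) /index_iota subn0.
apply: le_trans (wB N.+1); apply: ler_sum => m _.
by rewrite /w -!mulrA.
Qed.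

Lemma S_inf_POD (C t : R) : 0 <= C -> 1 <= t -> a < t ->
  summableR (fun j => gam j `^ (1 / t)) -> S_inf C (POD Gam gam).
Proof.
move=> C0 t_ge1 a_lt_t sum_gam; have t_gt0 : 0 < t by rewrite (lt_le_trans ltr01).
pose x (u : {fset nat}) := C ^+ (2 * #|` u|) * POD Gam gam u.
have x_ge0 u : 0 <= x u by rewrite mulr_ge0 ?exprn_ge0 ?POD_ge0.
have sum_x : summableR (fun u => x u `^ (1 / t)).
  have := weighted_POD_powR_summable C0 ler01 (divr_gt0 ltr01 t_gt0)
    (mul_root_lt1 t_gt0 a_lt_t) sum_gam.
  by rewrite /summableR; under eq_esum do rewrite expr1n mul1r.
exact: le_lt_trans (esum_le_powR_esum_root (f := x) t_ge1 x_ge0 sum_x) (ltry _).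
Qed.

Lemma POD_root_summable t : 0 < t -> a < t ->
  summableR (fun j => gam j `^ (1 / t)) ->
  summableR (fun u => POD Gam gam u `^ (1 / t)).
Proof.
move=> t_gt0 a_lt_t sum_gam.
have := weighted_POD_powR_summable ler01 ler01 (divr_gt0 ltr01 t_gt0)
  (mul_root_lt1 t_gt0 a_lt_t) sum_gam.
rewrite /summableR; under eq_esum do rewrite !expr1n !mul1r.
by rewrite div1r.
Qed.

Section Tup.
Variable C : R.
Hypothesis C_gt0 : 0 < C.

Lemma C2_POD_ge0 u : 0 <= C ^+ (2 * #|` u|) * POD Gam gam u.
Proof. by rewrite mulr_ge0 ?exprn_ge0 ?POD_ge0 ?ltW. Qed.

Lemma Tup_ge0 u : 0 <= Tup C (POD Gam gam) u.
Proof. by apply/fine_ge0/esum_ge0 => v _; rewrite lee_fin C2_POD_ge0. Qed.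

Lemma le_Tup u : S_inf C (POD Gam gam) ->
  C ^+ (2 * #|` u|) * POD Gam gam u <= Tup C (POD Gam gam) u.
Proof.
move=> HS; rewrite /Tup; set E := esum _ _.
have E_ge0 : (0 <= E)%E by apply: esum_ge0 => v _; rewrite lee_fin C2_POD_ge0.
have E_fin : E \is a fin_num by rewrite ge0_fin_numE // (le_lt_trans (esum_le_esumT _ _)).
rewrite -lee_fin fineK //; apply: esum_ge; exists [set u].
  by split; [exact: finite_set1 | move=> v /= ->; exact: fsubset_refl].
by rewrite fsbig_set1.
Qed.

Lemma gam_root_summable_of_Tup t : 0 < Gam 1%N -> S_inf C (POD Gam gam) -> 0 < t ->
  summableR (fun u => Tup C (POD Gam gam) u `^ (1 / t)) ->
  summableR (fun j => gam j `^ (1 / t)).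
Proof.
move=> Gam1_gt0 HS t_gt0; apply: (summableR_of_fset1 (c := (C ^+ 2 * Gam 1%N) `^ (1 / t))).
- by rewrite powR_gt0 // mulr_gt0 // exprn_gt0.
- by move=> j; exact: powR_ge0.
- by move=> u; exact: powR_ge0.
have c_ge0 : 0 <= C ^+ 2 * Gam 1%N by rewrite mulr_ge0 ?exprn_ge0 // ltW.
move=> j; rewrite -powRM //; apply: ge0_ler_powR.
- by rewrite divr_ge0 // ltW.
- by rewrite nnegrE mulr_ge0.
- by rewrite nnegrE Tup_ge0.
- by have := le_Tup [fset j]%fset HS; rewrite POD_fset1 cardfs1 muln1 mulrA.
Qed.

Lemma Tup_powR_root_le (t : R) (u : {fset nat}) : 1 <= t ->
  summableR (fun v : {fset nat} => (C ^+ (2 * #|` v|) * POD Gam gam v) `^ (1 / t)) ->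
  Tup C (POD Gam gam) u `^ (1 / t) <=
    fine (esum [set v : {fset nat} | (u `<=` v)%fset]
      (fun v => ((C ^+ (2 * #|` v|) * POD Gam gam v) `^ (1 / t))%:E)).
Proof.
move=> t_ge1 sum_x; have t_gt0 : 0 < t by rewrite (lt_le_trans ltr01).
pose x (v : {fset nat}) := C ^+ (2 * #|` v|) * POD Gam gam v.
set A := [set v : {fset nat} | _]; set E := esum A _.
have E_ge0 : (0 <= E)%E by apply: esum_ge0 => v _; rewrite lee_fin powR_ge0.
have E_fin : (E < +oo)%E := le_lt_trans (esum_le_esumT _ _) sum_x.
have := esum_le_powR_esum_root (f := x) t_ge1 C2_POD_ge0 E_fin.
rewrite /Tup -/A; set X := esum A _ => X_le.
have X_ge0 : (0 <= X)%E by apply: esum_ge0 => v _; rewrite lee_fin C2_POD_ge0.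
have X_fin : X \is a fin_num by rewrite ge0_fin_numE // (le_lt_trans X_le) ?ltry.
have TupE : fine X <= fine E `^ t by rewrite -lee_fin fineK.
apply: (le_trans (y := (fine E `^ t) `^ (1 / t))).
  by apply: ge0_ler_powR; rewrite ?nnegrE ?fine_ge0 ?powR_ge0 // divr_ge0 // ltW.
by rewrite -powRrM div1r mulfV ?gt_eqF // powRr1 // fine_ge0.
Qed.

Lemma Tup_root_summable t : 1 <= t -> a < t ->
  summableR (fun j => gam j `^ (1 / t)) ->
  summableR (fun u => Tup C (POD Gam gam) u `^ (1 / t)).
Proof.
move=> t_ge1 a_lt_t sum_gam; have t_gt0 : 0 < t by rewrite (lt_le_trans ltr01).
pose y (v : {fset nat}) := (C ^+ (2 * #|` v|) * POD Gam gam v) `^ (1 / t).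
have y_ge0 v : 0 <= y v by exact: powR_ge0.
have sum_wy D : 0 <= D -> summableR (fun v : {fset nat} => D ^+ #|` v| * y v).
  by move=> D0; apply: weighted_POD_powR_summable (ltW C_gt0) D0 _ _ sum_gam;
    rewrite ?divr_gt0 ?mul_root_lt1.
have sum_y : summableR y.
  by move: (sum_wy 1 ler01); rewrite /summableR; under eq_esum do rewrite expr1n mul1r.
pose E u := esum [set v : {fset nat} | (u `<=` v)%fset] (fun v => (y v)%:E).
have E_fin u : E u \is a fin_num.
  rewrite ge0_fin_numE; last by apply: esum_ge0 => v _; rewrite lee_fin.
  exact: le_lt_trans (esum_le_esumT _ _) sum_y.
apply/summableRP; first by move=> u; exact: powR_ge0.
exists (fine (esum setT (fun v : {fset nat} => (2 ^+ #|` v| * y v)%:E))) => s s_uniq.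
apply: (le_trans (y := \sum_(u <- s) fine (E u))).
  by apply: ler_sum => u _; exact: Tup_powR_root_le.
rewrite -lee_fin -sumEFin fineK; last first.
  rewrite ge0_fin_numE ?(sum_wy 2) // esum_ge0 // => v _.
  by rewrite lee_fin mulr_ge0 ?exprn_ge0.
under eq_bigr do rewrite fineK //.
exact: sum_esum_supersets_le.
Qed.

End Tup.
End POD_weights.

Section decay.
Context {R : realType}.

Lemma le_decay {V1 V2 : choiceType} (f : V1 -> R) (g : V2 -> R) :
  (forall t, 0 < t -> summableR (fun v => f v `^ (1 / t)) ->
     summableR (fun v => g v `^ (1 / t))) ->
  (decay f <= decay g)%E.
Proof.
move=> fg; apply: ge_ereal_sup => _ [[t [t_gt0 ft] <-]|->]; apply: ereal_sup_ubound.
  by left; exists t => //; split => //; exact: fg.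
by right.
Qed.

Lemma eq_decay {V1 V2 : choiceType} (f : V1 -> R) (g : V2 -> R) (m : R) :
  0 < m -> summableR (fun v => g v `^ (1 / m)) ->
  (forall t, 0 < t -> summableR (fun v => f v `^ (1 / t)) ->
     summableR (fun v => g v `^ (1 / t))) ->
  (forall t, m <= t -> summableR (fun v => g v `^ (1 / t)) ->
     summableR (fun v => f v `^ (1 / t))) ->
  decay f = decay g.
Proof.
move=> m_gt0 gm fg gf; apply/eqP; rewrite eq_le le_decay //=.
apply: ge_ereal_sup => _ [[t [t_gt0 gt] <-]|->]; last first.
  by apply: ereal_sup_ubound; right.
have [t_le_m|m_lt_t] := leP t m.
  apply: le_trans (_ : m%:E <= _)%E; first by rewrite lee_fin.
  by apply: ereal_sup_ubound; left; exists m => //; split => //; exact: gf.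
apply: ereal_sup_ubound; left; exists t => //; split => //.
exact: gf (ltW m_lt_t) gt.
Qed.

Lemma lt_decay_summable {V : choiceType} (f : V -> R) (x : R) : 0 <= x ->
  (x%:E < decay f)%E -> exists2 t, x < t & summableR (fun v => f v `^ (1 / t)).
Proof.
move=> x_ge0 /ereal_sup_gt[_ [[t [t_gt0 ft] <-]|->]]; last by rewrite lte_fin ltNge x_ge0.
by rewrite lte_fin => xt; exists t.
Qed.

End decay.

Theorem mainTheorem10 (R : realType) (C : R) (Gam gam : nat -> R) (a Ca : R) :
  0 < C ->
  (forall j, 0 <= gam j) ->
  (forall i j, (i <= j)%N -> gam j <= gam i) ->
  (forall k, 0 <= Gam k) ->
  0 < a -> 0 < Ca ->
  (forall k, Gam k <= Ca * (k`!)%:R `^ a) ->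
  0 < Gam 1%N ->
  (a%:E < decay gam)%E ->
  (esum setT (fun j : nat => (gam j)%:E) < +oo)%E ->
  S_inf C (POD Gam gam) /\
  decay (Tup C (POD Gam gam)) = decay (POD Gam gam) /\
  decay (POD Gam gam) = decay gam.
Proof.
move=> C_gt0 gam_ge0 _ Gam_ge0 a_gt0 Ca_gt0 Gam_le Gam1_gt0 a_lt_decay sum_gam.
have [m [m_ge1 a_lt_m sum_m]] : exists m, [/\ 1 <= m, a < m &
    summableR (fun j => gam j `^ (1 / m))].
  have [t a_lt_t sum_t] := lt_decay_summable (ltW a_gt0) a_lt_decay.
  have [t_le1|t_gt1] := leP t 1; last by exists t; rewrite ltW.
  exists 1; split => //; first exact: lt_le_trans t_le1.
  by rewrite /summableR; under eq_esum do rewrite divr1 powRr1 //.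
have m_gt0 : 0 < m := lt_le_trans ltr01 m_ge1.
have ge_m t : m <= t -> 1 <= t /\ a < t.
  by move=> mt; split; [exact: le_trans mt | exact: lt_le_trans mt].
have [a_ge0 Ca_ge0] := (ltW a_gt0, ltW Ca_gt0).
have HS := S_inf_POD gam_ge0 Gam_ge0 a_ge0 Ca_ge0 Gam_le (ltW C_gt0) m_ge1 a_lt_m sum_m.
have decay_POD : decay (POD Gam gam) = decay gam.
  apply: (eq_decay m_gt0 sum_m) => [t _|t /ge_m[t_ge1 a_lt_t]].
    exact: (gam_root_summable_of_POD gam_ge0 Gam_ge0 Gam1_gt0).
  have t_gt0 : 0 < t := lt_le_trans ltr01 t_ge1.
  exact: (POD_root_summable gam_ge0 Gam_ge0 a_ge0 Ca_ge0 Gam_le t_gt0 a_lt_t).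
split=> //; rewrite decay_POD; split=> //.
apply: (eq_decay m_gt0 sum_m) => [t t_gt0|t /ge_m[t_ge1 a_lt_t]].
  exact: (gam_root_summable_of_Tup gam_ge0 Gam_ge0 C_gt0 Gam1_gt0 HS t_gt0).
exact: (Tup_root_summable gam_ge0 Gam_ge0 a_ge0 Ca_ge0 Gam_le C_gt0 t_ge1 a_lt_t).
Qed.
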